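(* Let $m\ge 2$ and $1\le k\le m$. For $y\in\mathcal{Y}$ and $g\in\mathbb{R}^m$ define the truncated top-$k$ entropy loss $$L(y,g)=\log\Big(1+\sum_{j\in\mathcal{J}_y(g)}\exp(g_j-g_y)\Big),$$ where $\mathcal{J}_y(g)$ is a set of indices of $m-k$ smallest components of $(g_j)_{j\ne y}$ (the value of $L$ does not depend on how ties are broken). Then $L$ is top-$s$ calibrated for every $s$ with $k\le s\le m$.
   Context: Classes $\mathcal{Y}=\{1,\dots,m\}$. Top-$s$ error: $\mathrm{err}_s(y,g)=1$ if $|\{j\ne y: g_j\ge g_y\}|\ge s$ and $0$ otherwise. A loss $L:\mathcal{Y}\times\mathbb{R}^m\to\mathbb{R}$ is top-$s$ calibrated if for every probability vector $p\in\mathbb{R}^m$ with pairwise distinct coordinates, $\arg\min_{g\in\mathbb{R}^m}\sum_y p_y L(y,g)\subseteq\arg\min_{g\in\mathbb{R}^m}\sum_y p_y\,\mathrm{err}_s(y,g)$ (the left set may be empty). For $k=1$ the loss is the softmax loss. *)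

(* classical reals (exp, ln). Classes are 0..m-1 (nat), a score
   vector g in R^m is a function nat -> R (only coordinates < m matter). *)
From Stdlib Require Import Reals List Lia Lra.
Open Scope R_scope.

Definition sumR (l : list nat) (f : nat -> R) : R :=
  fold_right (fun i acc => f i + acc) 0 l.

Definition valid_trunc_set (m k y : nat) (g : nat -> R) (J : list nat) : Prop :=
  NoDup J /\ length J = (m - k)%nat /\
  (forall j, In j J -> (j < m)%nat /\ j <> y) /\
  (forall j j', In j J -> (j' < m)%nat -> j' <> y -> ~ In j' J -> g j <= g j').

(* truncated top-k entropy loss, for a given tie-breaking choice J of J_y(g) *)
Definition trunc_topk_loss (J : nat -> (nat -> R) -> list nat)
  (y : nat) (g : nat -> R) : R :=
  ln (1 + sumR (J y g) (fun j => exp (g j - g y))).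

Definition n_above (m y : nat) (g : nat -> R) : nat :=
  length (filter (fun j => andb (negb (Nat.eqb j y))
                                (if Rle_dec (g y) (g j) then true else false))
                 (seq 0 m)).

Definition top_err (m s y : nat) (g : nat -> R) : R :=
  if Nat.leb s (n_above m y g) then 1 else 0.

Definition prob_vector (m : nat) (p : nat -> R) : Prop :=
  (forall i, (i < m)%nat -> 0 <= p i) /\ sumR (seq 0 m) p = 1.

Definition distinct_coords (m : nat) (p : nat -> R) : Prop :=
  forall i j, (i < m)%nat -> (j < m)%nat -> i <> j -> p i <> p j.

Definition is_argmin (F : (nat -> R) -> R) (g : nat -> R) : Prop :=
  forall g', F g <= F g'.

Definition cond_risk (m : nat) (L : nat -> (nat -> R) -> R) (p : nat -> R)
  (g : nat -> R) : R :=
  sumR (seq 0 m) (fun y => p y * L y g).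

Definition top_s_calibrated (m s : nat) (L : nat -> (nat -> R) -> R) : Prop :=
  forall p, prob_vector m p -> distinct_coords m p ->
  forall g, is_argmin (cond_risk m L p) g ->
            is_argmin (cond_risk m (top_err m s) p) g.

(* At a minimiser [g] of the conditional risk, scores are ordered like the
   probabilities: [p j < p i] forces [g j < g i].  Since [J] minimises the
   truncated mass, the loss is bounded above by the same expression evaluated on
   any admissible set of [m - k] indices, and [ln (1 + x') <= ln (1 + x) +
   (x' - x) / (1 + x)] turns such bounds into bounds on risk increments.  A strict
   inversion [g i < g j] is excluded because transposing the two scores lowers the
   risk, the loss of a class strictly decreasing in its own score once [k < m]; a
   tie [g i = g j] is excluded because a positive combination of the increments of
   raising [g i] and lowering [g j] is negative.  As the coordinates of [p] are
   distinct, [g] then has the same top-[s] set as [p], and that set carries the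
   largest probability among all top-[s] sets.  For [s = m] the top-[s] error
   vanishes identically. *)

From Stdlib Require Import Reals List Lia Lra Classical.
Open Scope R_scope.

Lemma sumR_app l1 l2 f : sumR (l1 ++ l2) f = sumR l1 f + sumR l2 f.
Proof. induction l1 as [|x l1 IH]; simpl; [ring | rewrite IH; ring]. Qed.

Lemma sumR_elt l1 x l2 f : sumR (l1 ++ x :: l2) f = f x + sumR (l1 ++ l2) f.
Proof. rewrite !sumR_app; simpl; ring. Qed.

Lemma sumR_map (h : nat -> nat) l f : sumR (map h l) f = sumR l (fun x => f (h x)).
Proof. induction l as [|x l IH]; simpl; [ring | rewrite IH; ring]. Qed.

Lemma sumR_ext l f h : (forall x, In x l -> f x = h x) -> sumR l f = sumR l h.
Proof.
  induction l as [|x l IH]; simpl; intros E; [reflexivity|].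
  rewrite E, IH; auto.
Qed.

Lemma sumR_le l f h : (forall x, In x l -> f x <= h x) -> sumR l f <= sumR l h.
Proof.
  induction l as [|x l IH]; simpl; intros E; [lra|].
  specialize (IH (fun y Hy => E y (or_intror Hy))). specialize (E x (or_introl eq_refl)). lra.
Qed.

Lemma sumR_plus l f h : sumR l (fun x => f x + h x) = sumR l f + sumR l h.
Proof. induction l as [|x l IH]; simpl; [ring | rewrite IH; ring]. Qed.

Lemma sumR_minus l f h : sumR l (fun x => f x - h x) = sumR l f - sumR l h.
Proof. induction l as [|x l IH]; simpl; [ring | rewrite IH; ring]. Qed.

Lemma sumR_scal l c f : sumR l (fun x => c * f x) = c * sumR l f.
Proof. induction l as [|x l IH]; simpl; [ring | rewrite IH; ring]. Qed.

Lemma sumR_zero l : sumR l (fun _ => 0) = 0.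
Proof. induction l as [|x l IH]; simpl; [reflexivity | rewrite IH; ring]. Qed.

Lemma sumR_nonneg l f : (forall x, In x l -> 0 <= f x) -> 0 <= sumR l f.
Proof. intros H. rewrite <- (sumR_zero l). apply sumR_le; exact H. Qed.

Lemma sumR_pos l f : l <> nil -> (forall x, 0 < f x) -> 0 < sumR l f.
Proof.
  destruct l as [|x l]; [congruence|]. intros _ H; simpl.
  assert (0 <= sumR l f) by (apply sumR_nonneg; intros; left; auto).
  specialize (H x). lra.
Qed.

Lemma sumR_point l a c f : NoDup l -> In a l ->
  sumR l (fun x => if (x =? a)%nat then c else f x) = sumR l f + (c - f a).
Proof.
  intros Hl Ha. destruct (in_split _ _ Ha) as (l1 & l2 & ->).
  apply NoDup_remove_2 in Hl.
  rewrite !sumR_elt, Nat.eqb_refl, (sumR_ext _ _ f); [ring|].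
  intros x Hx. destruct (Nat.eqb_spec x a) as [->|]; tauto.
Qed.

Lemma sumR_le_pair l a b f : NoDup l -> In a l -> In b l -> a <> b ->
  (forall y, In y l -> y <> a -> y <> b -> f y <= 0) -> sumR l f <= f a + f b.
Proof.
  intros Hl Ha Hb Hab Hf.
  apply Rle_trans with
    (sumR l (fun y => if (y =? a)%nat then f a else if (y =? b)%nat then f b else 0)).
  - apply sumR_le. intros y Hy.
    destruct (Nat.eqb_spec y a) as [->|]; [lra|].
    destruct (Nat.eqb_spec y b) as [->|]; [lra|]. auto.
  - rewrite sumR_point, sumR_point, sumR_zero by assumption.
    destruct (Nat.eqb_spec a b); [congruence|]. lra.
Qed.

Lemma sumR_indicator l (P : nat -> bool) :
  sumR l (fun y => if P y then 1 else 0) = INR (length (filter P l)).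
Proof.
  induction l as [|x l IH]; simpl; [reflexivity|].
  rewrite IH. destruct (P x); simpl length; [rewrite S_INR|]; ring.
Qed.

Lemma sumR_threshold l p z w th : 0 <= th ->
  (forall y, In y l -> 0 <= z y <= 1) ->
  (forall y, In y l -> (w y = 1 /\ th <= p y) \/ (w y = 0 /\ p y <= th)) ->
  sumR l z <= sumR l w ->
  sumR l (fun y => p y * z y) <= sumR l (fun y => p y * w y).
Proof.
  intros Hth Hz Hw Hzw.
  apply Rle_trans with (sumR l (fun y => (p y * w y - th * w y) + th * z y)).
  - apply sumR_le. intros y Hy. specialize (Hz y Hy).
    destruct (Hw y Hy) as [[-> ?] | [-> ?]]; nra.
  - rewrite sumR_plus, sumR_minus, !sumR_scal. nra.
Qed.

Lemma exists_argmin (f : nat -> R) l : l <> nil ->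
  exists x, In x l /\ forall y, In y l -> f x <= f y.
Proof.
  induction l as [|a l IH]; intros H; [congruence|].
  destruct l as [|b l'].
  - exists a. split; [left; auto|]. intros y [<-|[]]; lra.
  - destruct IH as (x & Hx & Hmin); [discriminate|].
    destruct (Rle_dec (f a) (f x)).
    + exists a. split; [left; auto|]. intros y [<-|Hy]; [lra|]. specialize (Hmin y Hy); lra.
    + exists x. split; [right; auto|]. intros y [<-|Hy]; [lra|]. auto.
Qed.

Lemma NoDup_exists_notin (l l' : list nat) : NoDup l -> (length l' < length l)%nat ->
  exists x, In x l /\ ~ In x l'.
Proof.
  intros Hl Hlen. apply NNPP. intros Hno.
  assert (incl l l').
  { intros x Hx. apply NNPP. intros Hx'. apply Hno. exists x; auto. }
  pose proof (NoDup_incl_length Hl H). lia.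
Qed.

Lemma sumR_exchange (f : nat -> R) : forall K J, NoDup J -> NoDup K ->
  length J = length K ->
  (forall j j', In j J -> In j' K -> ~ In j' J -> f j <= f j') ->
  sumR J f <= sumR K f.
Proof.
  induction K as [|k K IH]; intros J HJ HK Hlen Hf.
  { destruct J; simpl in *; [lra | discriminate]. }
  apply NoDup_cons_iff in HK as [HkK HK].
  assert (Hx : exists x, In x J /\ ~ In x K /\ f x <= f k).
  { destruct (in_dec Nat.eq_dec k J) as [HkJ | HkJ].
    - exists k. repeat split; auto; lra.
    - destruct (NoDup_exists_notin J K) as (x & HxJ & HxK); [auto | simpl in *; lia |].
      exists x. repeat split; auto.
      apply Hf; [auto | left; reflexivity | auto]. }
  destruct Hx as (x & HxJ & HxK & Hfx).
  destruct (in_split _ _ HxJ) as (l1 & l2 & ->).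
  rewrite sumR_elt. simpl.
  assert (sumR (l1 ++ l2) f <= sumR K f).
  { apply IH; auto.
    - eapply NoDup_remove_1; eauto.
    - rewrite length_app in *; simpl in *; lia.
    - intros j j' Hj Hj' Hj'J. apply Hf; [| right; auto |].
      + apply in_or_app. apply in_app_or in Hj. simpl. tauto.
      + intros H. apply in_elt_inv in H as [-> | H]; auto. }
  lra.
Qed.

Lemma in_seq0 m y : In y (seq 0 m) <-> (y < m)%nat.
Proof. rewrite in_seq. lia. Qed.

Lemma exp_le x y : x <= y -> exp x <= exp y.
Proof. intros [H | <-]; [left; apply exp_increasing; auto | lra]. Qed.

Lemma ln_le x y : 0 < x -> x <= y -> ln x <= ln y.
Proof. intros Hx [H | <-]; [left; apply ln_increasing; auto | lra]. Qed.

Lemma ln_one_plus_le x x' : 0 <= x -> 0 <= x' ->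
  ln (1 + x') <= ln (1 + x) + (x' - x) / (1 + x).
Proof.
  intros Hx Hx'.
  assert (Hq : 0 < (1 + x') / (1 + x)) by (apply Rdiv_lt_0_compat; lra).
  replace (1 + x') with ((1 + x) * ((1 + x') / (1 + x))) at 1 by (field; lra).
  rewrite ln_mult by lra.
  assert (ln ((1 + x') / (1 + x)) <= (1 + x') / (1 + x) - 1).
  { pose proof (exp_ineq1_le (ln ((1 + x') / (1 + x)))) as H.
    rewrite exp_ln in H by exact Hq. lra. }
  replace ((x' - x) / (1 + x)) with ((1 + x') / (1 + x) - 1) by (field; lra). lra.
Qed.

Lemma exists_gt1_sq_mul_lt a b : 0 <= b -> b < a -> exists E, 1 < E /\ E * E * b < a.
Proof.
  intros Hb Hba. set (u := (a - b) / (3 * (a + b))).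
  assert (Hu : u * (3 * (a + b)) = a - b) by (unfold u; field; lra).
  assert (0 < u) by (unfold u; apply Rdiv_lt_0_compat; lra).
  exists (1 + u). split; [lra | nra].
Qed.

Definition sum_exp (g : nat -> R) (K : list nat) : R := sumR K (fun j => exp (g j)).

Definition trunc_mass (g : nat -> R) (y : nat) (K : list nat) : R :=
  exp (- g y) * sum_exp g K.

Definition candidate (m k y : nat) (K : list nat) : Prop :=
  NoDup K /\ length K = (m - k)%nat /\ (forall j, In j K -> (j < m)%nat /\ j <> y).

Lemma sum_exp_pos g K : K <> nil -> 0 < sum_exp g K.
Proof. intros HK. apply sumR_pos; auto using exp_pos. Qed.

Lemma trunc_mass_nonneg g y K : 0 <= trunc_mass g y K.
Proof.
  apply Rmult_le_pos; [left; apply exp_pos|].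
  apply sumR_nonneg. intros; left; apply exp_pos.
Qed.

Lemma valid_candidate m k y g K : valid_trunc_set m k y g K -> candidate m k y K.
Proof. intros (? & ? & Hrange & _); repeat split; auto; apply Hrange; auto. Qed.

Lemma sum_exp_valid_le m k y g J K :
  valid_trunc_set m k y g J -> candidate m k y K -> sum_exp g J <= sum_exp g K.
Proof.
  intros (HJ & HJlen & _ & HJmin) (HK & HKlen & HKrange).
  apply sumR_exchange; auto; [congruence|].
  intros j j' Hj Hj' Hj'J. apply exp_le.
  destruct (HKrange j' Hj'). apply HJmin; auto.
Qed.

Definition transp (i j x : nat) : nat :=
  if (x =? i)%nat then j else if (x =? j)%nat then i else x.

Lemma transpK i j x : transp i j (transp i j x) = x.
Proof.
  unfold transp.
  destruct (Nat.eqb_spec x i), (Nat.eqb_spec x j); subst;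
  repeat (rewrite ?Nat.eqb_refl; simpl;
          try match goal with |- context [(?a =? ?b)%nat] => destruct (Nat.eqb_spec a b) end);
  congruence.
Qed.

Lemma transp_inj i j x x' : transp i j x = transp i j x' -> x = x'.
Proof. intros H. rewrite <- (transpK i j x), H, transpK. reflexivity. Qed.

Lemma transp_lt m i j x : (i < m)%nat -> (j < m)%nat -> (x < m)%nat -> (transp i j x < m)%nat.
Proof. unfold transp. destruct (x =? i)%nat, (x =? j)%nat; auto. Qed.

Lemma transp_l i j : transp i j i = j.
Proof. unfold transp. rewrite Nat.eqb_refl. reflexivity. Qed.

Lemma transp_r i j : transp i j j = i.
Proof. unfold transp. destruct (Nat.eqb_spec j i); [congruence|]. rewrite Nat.eqb_refl. reflexivity. Qed.

Lemma transp_other i j x : x <> i -> x <> j -> transp i j x = x.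
Proof. intros. unfold transp. destruct (Nat.eqb_spec x i), (Nat.eqb_spec x j); congruence. Qed.

Lemma in_map_transp i j x K : In (transp i j x) (map (transp i j) K) <-> In x K.
Proof.
  rewrite in_map_iff. split.
  - intros (x' & Hx' & HK). apply transp_inj in Hx'. subst. exact HK.
  - intros HK. exists x. auto.
Qed.

Lemma transp_tie (g : nat -> R) i j : g i = g j -> forall x, g (transp i j x) = g x.
Proof.
  intros Hg x. unfold transp.
  destruct (Nat.eqb_spec x i) as [->|]; [auto|].
  destruct (Nat.eqb_spec x j) as [->|]; auto.
Qed.

Lemma sum_exp_map_transp g i j K :
  sum_exp g (map (transp i j) K) = sum_exp (fun x => g (transp i j x)) K.
Proof. apply sumR_map. Qed.

Lemma candidate_transp m k i j y K : (i < m)%nat -> (j < m)%nat ->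
  candidate m k y K -> candidate m k (transp i j y) (map (transp i j) K).
Proof.
  intros Hi Hj (HK & HKlen & HKrange). split; [|split].
  - apply NoDup_map_NoDup_ForallPairs; [|exact HK].
    intros x x' _ _. apply transp_inj.
  - rewrite length_map. exact HKlen.
  - intros x Hx. apply in_map_iff in Hx as (x' & <- & Hx'). apply HKrange in Hx' as [? Hy].
    split; [apply transp_lt; auto|]. intros Heq. apply transp_inj in Heq. auto.
Qed.

Definition bump (g : nat -> R) (i : nat) (t : R) : nat -> R :=
  fun x => if (x =? i)%nat then g i + t else g x.

Definition mem_ind (i : nat) (K : list nat) : R := if in_dec Nat.eq_dec i K then 1 else 0.

Lemma bump_self g i t : bump g i t i = g i + t.
Proof. unfold bump. rewrite Nat.eqb_refl. reflexivity. Qed.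

Lemma bump_other g i t x : x <> i -> bump g i t x = g x.
Proof. unfold bump. destruct (Nat.eqb_spec x i); congruence. Qed.

Lemma sum_exp_bump g i t K : NoDup K ->
  sum_exp (bump g i t) K = sum_exp g K + mem_ind i K * (exp (g i) * (exp t - 1)).
Proof.
  intros HK. unfold sum_exp, mem_ind.
  rewrite (sumR_ext _ _ (fun x => if (x =? i)%nat then exp (g i) * exp t else exp (g x))).
  2:{ intros x _. unfold bump. destruct (x =? i)%nat; [apply exp_plus | reflexivity]. }
  destruct (in_dec Nat.eq_dec i K) as [Hi | Hi].
  - rewrite sumR_point by assumption. ring.
  - rewrite (sumR_ext _ _ (fun x => exp (g x))); [ring|].
    intros x Hx. destruct (Nat.eqb_spec x i) as [->|]; tauto.
Qed.

Lemma mem_ind_notin i K : ~ In i K -> mem_ind i K = 0.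
Proof. unfold mem_ind. destruct (in_dec Nat.eq_dec i K); tauto. Qed.

Lemma mem_ind_range i K : 0 <= mem_ind i K <= 1.
Proof. unfold mem_ind. destruct (in_dec Nat.eq_dec i K); lra. Qed.

Lemma mem_ind_map_transp i j x K : mem_ind (transp i j x) (map (transp i j) K) = mem_ind x K.
Proof.
  unfold mem_ind. pose proof (in_map_transp i j x K).
  destruct (in_dec Nat.eq_dec (transp i j x) (map (transp i j) K)),
           (in_dec Nat.eq_dec x K); tauto.
Qed.

Section TruncatedLoss.

Variables (m k : nat) (J : nat -> (nat -> R) -> list nat).
Hypothesis J_valid : forall y g, (y < m)%nat -> valid_trunc_set m k y g (J y g).

Local Notation L := (trunc_topk_loss J).

Lemma loss_mass y g : L y g = ln (1 + trunc_mass g y (J y g)).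
Proof.
  unfold trunc_topk_loss, trunc_mass, sum_exp. rewrite <- sumR_scal.
  do 2 f_equal. apply sumR_ext. intros j _.
  unfold Rminus. rewrite exp_plus. ring.
Qed.

Lemma trunc_candidate y g : (y < m)%nat -> candidate m k y (J y g).
Proof. intros Hy. exact (valid_candidate _ _ _ _ _ (J_valid y g Hy)). Qed.

Lemma trunc_notin_self y g : (y < m)%nat -> ~ In y (J y g).
Proof. intros Hy Hin. apply (trunc_candidate y g Hy) in Hin. tauto. Qed.

Lemma loss_le_candidate y g K : (y < m)%nat -> candidate m k y K ->
  L y g <= ln (1 + trunc_mass g y K).
Proof.
  intros Hy HK. rewrite loss_mass.
  apply ln_le; [pose proof (trunc_mass_nonneg g y (J y g)); lra|].
  apply Rplus_le_compat_l, Rmult_le_compat_l; [left; apply exp_pos|].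
  eapply sum_exp_valid_le; eauto.
Qed.

Lemma loss_sub_le y g h K : (y < m)%nat -> candidate m k y K ->
  L y h - L y g <=
  (trunc_mass h y K - trunc_mass g y (J y g)) / (1 + trunc_mass g y (J y g)).
Proof.
  intros Hy HK.
  pose proof (loss_le_candidate y h K Hy HK).
  pose proof (ln_one_plus_le _ _ (trunc_mass_nonneg g y (J y g)) (trunc_mass_nonneg h y K)).
  rewrite (loss_mass y g). lra.
Qed.

Lemma sum_exp_trunc_antitone g i j : (i < m)%nat -> (j < m)%nat -> g i <= g j ->
  sum_exp g (J j g) <= sum_exp g (J i g).
Proof.
  intros Hi Hj Hg.
  apply Rle_trans with (sum_exp g (map (transp i j) (J i g))).
  - eapply sum_exp_valid_le; [apply J_valid; exact Hj|].
    rewrite <- (transp_l i j) at 1. apply candidate_transp; auto using trunc_candidate.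
  - rewrite sum_exp_map_transp. apply sumR_le. intros x Hx. apply exp_le.
    unfold transp. destruct (Nat.eqb_spec x i) as [->|]; [exfalso; apply (trunc_notin_self i g); auto|].
    destruct (Nat.eqb_spec x j) as [->|]; lra.
Qed.

Lemma sum_exp_trunc_pos g y : (k < m)%nat -> (y < m)%nat -> 0 < sum_exp g (J y g).
Proof.
  intros Hk Hy. apply sum_exp_pos. intros HJ.
  destruct (trunc_candidate y g Hy) as (_ & Hlen & _). rewrite HJ in Hlen. simpl in Hlen. lia.
Qed.

Lemma loss_lt g i j : (k < m)%nat -> (i < m)%nat -> (j < m)%nat -> g i < g j ->
  L j g < L i g.
Proof.
  intros Hk Hi Hj Hg. rewrite !loss_mass.
  apply ln_increasing; [pose proof (trunc_mass_nonneg g j (J j g)); lra|].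
  apply Rplus_lt_compat_l. unfold trunc_mass.
  pose proof (sum_exp_trunc_antitone g i j Hi Hj (Rlt_le _ _ Hg)).
  pose proof (sum_exp_trunc_pos g j Hk Hj).
  assert (exp (- g j) < exp (- g i)) by (apply exp_increasing; lra).
  pose proof (exp_pos (- g i)). nra.
Qed.

Lemma loss_transp_le g i j y : (i < m)%nat -> (j < m)%nat -> (y < m)%nat ->
  L y (fun x => g (transp i j x)) <= L (transp i j y) g.
Proof.
  intros Hi Hj Hy.
  assert (Hty : (transp i j y < m)%nat) by (apply transp_lt; auto).
  eapply Rle_trans.
  - apply (loss_le_candidate y _ (map (transp i j) (J (transp i j y) g))); [exact Hy|].
    rewrite <- (transpK i j y) at 1. apply candidate_transp; auto using trunc_candidate.
  - rewrite loss_mass. right. unfold trunc_mass. rewrite sum_exp_map_transp.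
    do 3 f_equal. apply sumR_ext. intros x _. rewrite transpK. reflexivity.
Qed.

Section Tie.

Variables (g : nat -> R) (a b : nat) (t : R).
Hypotheses (a_lt_m : (a < m)%nat) (b_lt_m : (b < m)%nat) (a_neq_b : a <> b)
  (g_tie : g a = g b) (t_pos : 0 < t).

Let E := exp t.
Let S := sum_exp g (J b g).
Let X := exp (- g b) * S.
Let iota := mem_ind a (J b g).

Let variation (y : nat) : R :=
  E * (L y (bump g a t) - L y g) + E * E * (L y (bump g b (- t)) - L y g).

Lemma E_gt1 : 1 < E.
Proof. unfold E. rewrite <- exp_0. apply exp_increasing. exact t_pos. Qed.

(* Away from [a] and [b], the pair [a, b] can be arranged so that [b] is kept
   whenever [a] is. *)
Lemma tie_candidate y : (y < m)%nat -> y <> a -> y <> b ->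
  exists K, candidate m k y K /\ sum_exp g K = sum_exp g (J y g) /\ mem_ind a K <= mem_ind b K.
Proof.
  intros Hy Hya Hyb.
  destruct (in_dec Nat.eq_dec a (J y g)) as [Ha | Ha];
    [destruct (in_dec Nat.eq_dec b (J y g)) as [Hb | Hb] |].
  - exists (J y g). unfold mem_ind.
    destruct (in_dec Nat.eq_dec a (J y g)), (in_dec Nat.eq_dec b (J y g)); try tauto.
    split; [apply trunc_candidate; exact Hy | split; [reflexivity | lra]].
  - exists (map (transp a b) (J y g)). split; [|split].
    + rewrite <- (transp_other a b y) at 1 by auto.
      apply candidate_transp; auto using trunc_candidate.
    + rewrite sum_exp_map_transp. apply sumR_ext. intros x _. rewrite transp_tie; auto.
    + pose proof (mem_ind_map_transp a b b (J y g)) as Hia. rewrite transp_r in Hia.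
      pose proof (mem_ind_map_transp a b a (J y g)) as Hib. rewrite transp_l in Hib.
      rewrite Hia, Hib, mem_ind_notin by exact Hb. apply mem_ind_range.
  - exists (J y g). rewrite mem_ind_notin by exact Ha.
    split; [apply trunc_candidate; exact Hy | split; [reflexivity | apply mem_ind_range]].
Qed.

Lemma variation_other y : (y < m)%nat -> y <> a -> y <> b -> variation y <= 0.
Proof.
  intros Hy Hya Hyb.
  destruct (tie_candidate y Hy Hya Hyb) as (K & HK & HS & Hind).
  pose proof (loss_sub_le y g (bump g a t) K Hy HK) as Hu.
  pose proof (loss_sub_le y g (bump g b (- t)) K Hy HK) as Hd.
  unfold trunc_mass in Hu, Hd.
  rewrite bump_other in Hu, Hd by assumption.
  destruct HK as [HK _].
  rewrite sum_exp_bump, HS in Hu, Hd by exact HK.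
  rewrite <- g_tie, (exp_Ropp t) in Hd. fold E in Hu, Hd.
  set (e := exp (- g y)) in *. set (c := exp (g a)) in *.
  set (D := 1 + e * sum_exp g (J y g)) in *.
  assert (0 < e) by apply exp_pos. assert (0 < c) by apply exp_pos.
  assert (0 < D) by (pose proof (trunc_mass_nonneg g y (J y g)) as HX; exact (Rplus_lt_le_0_compat 1 _ Rlt_0_1 HX)).
  pose proof E_gt1.
  assert (Hv : variation y <=
    E * ((e * (sum_exp g (J y g) + mem_ind a K * (c * (E - 1))) - e * sum_exp g (J y g)) / D) +
    E * E * ((e * (sum_exp g (J y g) + mem_ind b K * (c * (/ E - 1))) - e * sum_exp g (J y g)) / D)).
  { unfold variation. apply Rplus_le_compat; apply Rmult_le_compat_l; auto; nra. }
  replace (E * _ + _) with (e * c * E * (E - 1) / D * (mem_ind a K - mem_ind b K)) in Hv by (field; lra).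
  assert (0 <= e * c * E * (E - 1) / D).
  { unfold Rdiv. repeat apply Rmult_le_pos; try lra. left; apply Rinv_0_lt_compat; lra. }
  nra.
Qed.

Lemma sum_exp_trunc_tie : sum_exp g (J a g) = S.
Proof.
  apply Rle_antisym; apply sum_exp_trunc_antitone; auto; lra.
Qed.

Lemma trunc_mass_tie : trunc_mass g a (J a g) = X.
Proof. unfold trunc_mass, X. rewrite sum_exp_trunc_tie, g_tie. reflexivity. Qed.

Lemma S_nonneg : 0 <= S.
Proof. apply sumR_nonneg. intros; left; apply exp_pos. Qed.

Lemma X_nonneg : 0 <= X.
Proof. exact (trunc_mass_nonneg g b (J b g)). Qed.

Lemma variation_at_a : variation a <= - (E - 1) * (X + E * iota) / (1 + X).
Proof.
  pose proof (candidate_transp m k a b b (J b g) a_lt_m b_lt_m (trunc_candidate b g b_lt_m))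
    as HK.
  rewrite transp_r in HK.
  set (K := map (transp a b) (J b g)) in HK.
  assert (HS : sum_exp g K = S).
  { unfold K. rewrite sum_exp_map_transp. apply sumR_ext. intros x _. rewrite transp_tie; auto. }
  assert (Hia : mem_ind a K = 0) by (apply mem_ind_notin; intros Ha; apply HK in Ha; tauto).
  assert (Hib : mem_ind b K = iota).
  { unfold K, iota. rewrite <- (mem_ind_map_transp a b a), transp_l. reflexivity. }
  pose proof (loss_sub_le a g (bump g a t) K a_lt_m HK) as Hu.
  pose proof (loss_sub_le a g (bump g b (- t)) K a_lt_m HK) as Hd.
  rewrite trunc_mass_tie in Hu, Hd. unfold trunc_mass in Hu, Hd.
  rewrite bump_self in Hu. rewrite bump_other in Hd by exact a_neq_b.
  destruct HK as [HK _].
  rewrite sum_exp_bump, HS in Hu, Hd by exact HK.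
  rewrite Hia in Hu. rewrite Hib in Hd. rewrite g_tie in Hu, Hd.
  pose proof E_gt1. pose proof X_nonneg.
  eapply Rle_trans.
  { unfold variation. apply Rplus_le_compat; apply Rmult_le_compat_l;
      [lra | exact Hu | nra | exact Hd]. }
  right. unfold X, E. rewrite Ropp_plus_distr, exp_plus, !exp_Ropp.
  pose proof (exp_pos (g b)). pose proof (exp_pos t). pose proof S_nonneg.
  field. repeat split; lra.
Qed.

Lemma variation_at_b : variation b <= (E - 1) * (E * iota + E * E * X) / (1 + X).
Proof.
  pose proof (trunc_candidate b g b_lt_m) as HK.
  pose proof (loss_sub_le b g (bump g a t) (J b g) b_lt_m HK) as Hu.
  pose proof (loss_sub_le b g (bump g b (- t)) (J b g) b_lt_m HK) as Hd.
  fold S X in Hu, Hd. unfold trunc_mass in Hu, Hd.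
  rewrite bump_other in Hu by auto. rewrite bump_self in Hd.
  destruct HK as [HK _].
  rewrite sum_exp_bump in Hu, Hd by exact HK.
  rewrite (mem_ind_notin b) in Hd by (apply trunc_notin_self; exact b_lt_m).
  fold S iota in Hu, Hd. rewrite g_tie in Hu.
  pose proof E_gt1. pose proof X_nonneg.
  eapply Rle_trans.
  { unfold variation. apply Rplus_le_compat; apply Rmult_le_compat_l;
      [lra | exact Hu | nra | exact Hd]. }
  right. unfold X, E. rewrite Ropp_plus_distr, Ropp_involutive, exp_plus, !exp_Ropp.
  pose proof (exp_pos (g b)). pose proof (exp_pos t). pose proof S_nonneg.
  field. repeat split; lra.
Qed.

Lemma variation_pair pa pb : (k < m)%nat -> 0 <= pb -> E * E * pb < pa ->
  pa * variation a + pb * variation b < 0.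
Proof.
  intros Hk Hpb Hp.
  pose proof E_gt1 as HE.
  assert (HX : 0 < X).
  { apply Rmult_lt_0_compat; [apply exp_pos | apply sum_exp_trunc_pos; auto]. }
  assert (Hpa : 0 <= pa) by nra.
  pose proof (mem_ind_range a (J b g)) as Hiota. fold iota in Hiota.
  apply Rle_lt_trans with
    ((E - 1) / (1 + X) * (X * (E * E * pb - pa) + E * iota * (pb - pa))).
  - pose proof variation_at_a. pose proof variation_at_b.
    apply Rle_trans with
      (pa * (- (E - 1) * (X + E * iota) / (1 + X)) + pb * ((E - 1) * (E * iota + E * E * X) / (1 + X))).
    + apply Rplus_le_compat; apply Rmult_le_compat_l; auto.
    + right. field. lra.
  - assert (0 < (E - 1) / (1 + X)) by (apply Rdiv_lt_0_compat; lra).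
    assert (X * (E * E * pb - pa) < 0) by nra.
    assert (pb <= E * E * pb) by (rewrite <- (Rmult_1_l pb) at 1; apply Rmult_le_compat_r; nra).
    assert (E * iota * (pb - pa) <= 0).
    { assert (0 <= E * iota) by (apply Rmult_le_pos; lra). nra. }
    nra.
Qed.

End Tie.

Section Minimizer.

Variables (p g : nat -> R).
Hypotheses (k_lt_m : (k < m)%nat) (p_nonneg : forall y, (y < m)%nat -> 0 <= p y)
  (g_min : is_argmin (cond_risk m L p) g).

Lemma minimizer_no_inversion i j : (i < m)%nat -> (j < m)%nat -> p j < p i -> ~ g i < g j.
Proof.
  intros Hi Hj Hp Hg.
  assert (Hij : i <> j) by (intros ->; lra).
  pose proof (g_min (fun x => g (transp i j x))) as Hmin. unfold cond_risk in Hmin.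
  enough (sumR (seq 0 m) (fun y => p y * L y (fun x => g (transp i j x)) - p y * L y g) < 0)
    by (rewrite sumR_minus in *; lra).
  apply Rle_lt_trans with (sumR (seq 0 m) (fun y => p y * (L (transp i j y) g - L y g))).
  - apply sumR_le. intros y Hy. apply in_seq0 in Hy.
    pose proof (loss_transp_le g i j y Hi Hj Hy). pose proof (p_nonneg y Hy). nra.
  - eapply Rle_lt_trans.
    + apply (sumR_le_pair _ i j); auto using seq_NoDup; try (apply in_seq0; auto).
      intros y _ Hyi Hyj. rewrite transp_other by auto. lra.
    + cbv beta. rewrite transp_l, transp_r.
      pose proof (loss_lt g i j k_lt_m Hi Hj Hg). nra.
Qed.

(* Raising [g a] and lowering [g b] by [t], weighted by [exp t] and [exp (2 t)]:
   the classes other than [a] and [b] cannot gain, and [a] gains more than [b] loses. *)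
Lemma minimizer_no_tie a b : (a < m)%nat -> (b < m)%nat -> p b < p a -> g a <> g b.
Proof.
  intros Ha Hb Hp Hg.
  assert (Hab : a <> b) by (intros ->; lra).
  destruct (exists_gt1_sq_mul_lt (p a) (p b)) as (E & HE & HEp); auto.
  assert (Ht : 0 < ln E) by (rewrite <- ln_1; apply ln_increasing; lra).
  assert (HEt : exp (ln E) = E) by (apply exp_ln; lra).
  set (t := ln E) in *.
  set (variation y := exp t * (L y (bump g a t) - L y g) +
                      exp t * exp t * (L y (bump g b (- t)) - L y g)).
  assert (H0 : 0 <= sumR (seq 0 m) (fun y => p y * variation y)).
  { pose proof (g_min (bump g a t)) as Hu. pose proof (g_min (bump g b (- t))) as Hd.
    unfold cond_risk in Hu, Hd.
    rewrite (sumR_ext _ _ (fun y => exp t * (p y * L y (bump g a t) - p y * L y g) +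
      exp t * exp t * (p y * L y (bump g b (- t)) - p y * L y g))) by (intros; unfold variation; ring).
    rewrite sumR_plus, !sumR_scal, !sumR_minus. pose proof (exp_pos t).
    apply Rplus_le_le_0_compat; apply Rmult_le_pos; nra. }
  enough (sumR (seq 0 m) (fun y => p y * variation y) < 0) by lra.
  eapply Rle_lt_trans.
  - apply (sumR_le_pair _ a b); auto using seq_NoDup; try (apply in_seq0; auto).
    intros y Hy Hya Hyb. apply in_seq0 in Hy.
    pose proof (variation_other g a b t Ha Hb Hg Ht y Hy Hya Hyb). pose proof (p_nonneg y Hy).
    unfold variation. nra.
  - apply variation_pair; auto. rewrite HEt. exact HEp.
Qed.

Lemma minimizer_order i j : (i < m)%nat -> (j < m)%nat -> p j < p i -> g j < g i.
Proof.
  intros Hi Hj Hp.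
  pose proof (minimizer_no_inversion i j Hi Hj Hp).
  pose proof (minimizer_no_tie i j Hi Hj Hp).
  destruct (Rtotal_order (g i) (g j)) as [? | [? | ?]]; tauto.
Qed.

End Minimizer.

End TruncatedLoss.

Definition above (m : nat) (h : nat -> R) (y : nat) : list nat :=
  filter (fun j => andb (negb (j =? y)%nat) (if Rle_dec (h y) (h j) then true else false))
         (seq 0 m).

Lemma n_above_length m y h : n_above m y h = length (above m h y).
Proof. reflexivity. Qed.

Lemma In_above m h y j : In j (above m h y) <-> (j < m)%nat /\ j <> y /\ h y <= h j.
Proof.
  unfold above. rewrite filter_In, in_seq0.
  destruct (Nat.eqb_spec j y), (Rle_dec (h y) (h j)); simpl; intuition congruence.
Qed.

Lemma NoDup_above m h y : NoDup (above m h y).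
Proof. apply NoDup_filter, seq_NoDup. Qed.

Lemma NoDup_cons_above m h y : NoDup (y :: above m h y).
Proof.
  constructor; [|apply NoDup_above]. intros Hy. apply In_above in Hy. tauto.
Qed.

Lemma n_above_lt_m m y h : (y < m)%nat -> (n_above m y h < m)%nat.
Proof.
  intros Hy. rewrite n_above_length.
  assert (Hincl : incl (y :: above m h y) (seq 0 m)).
  { intros j [<- | Hj]; apply in_seq0; [exact Hy | apply In_above in Hj; tauto]. }
  pose proof (NoDup_incl_length (NoDup_cons_above m h y) Hincl) as Hlen.
  rewrite length_seq in Hlen. simpl in Hlen. lia.
Qed.

Lemma n_above_lt m h x y : (x < m)%nat -> h y < h x -> (n_above m x h < n_above m y h)%nat.
Proof.
  intros Hx Hyx. rewrite !n_above_length.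
  assert (Hincl : incl (x :: above m h x) (above m h y)).
  { intros j Hj. apply In_above.
    destruct Hj as [<- | Hj]; [|apply In_above in Hj]; repeat split; try tauto; try lra;
      intros ->; lra. }
  pose proof (NoDup_incl_length (NoDup_cons_above m h x) Hincl). simpl in *. lia.
Qed.

Lemma n_above_ext m y g h :
  (forall j, (j < m)%nat -> j <> y -> (g y <= g j <-> h y <= h j)) ->
  n_above m y g = n_above m y h.
Proof.
  intros Hgh. rewrite !n_above_length. f_equal. apply filter_ext_in.
  intros j Hj. apply in_seq0 in Hj.
  destruct (Nat.eqb_spec j y) as [-> | Hjy]; [reflexivity|]. simpl.
  specialize (Hgh j Hj Hjy).
  destruct (Rle_dec (g y) (g j)), (Rle_dec (h y) (h j)); tauto.
Qed.

Lemma n_above_order m p g y : distinct_coords m p ->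
  (forall i j, (i < m)%nat -> (j < m)%nat -> p j < p i -> g j < g i) ->
  (y < m)%nat -> n_above m y g = n_above m y p.
Proof.
  intros Hp Hpg Hy. apply n_above_ext. intros j Hj Hjy.
  destruct (Rtotal_order (p y) (p j)) as [Hlt | [Heq | Hlt]].
  - pose proof (Hpg j y Hj Hy Hlt). lra.
  - exfalso. apply (Hp y j); auto.
  - pose proof (Hpg y j Hy Hj Hlt). lra.
Qed.

Definition top_set (m s : nat) (h : nat -> R) : list nat :=
  filter (fun y => (n_above m y h <? s)%nat) (seq 0 m).

Definition top_ind (m s : nat) (h : nat -> R) (y : nat) : R :=
  if (n_above m y h <? s)%nat then 1 else 0.

Lemma In_top_set m s h y : In y (top_set m s h) <-> (y < m)%nat /\ (n_above m y h < s)%nat.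
Proof. unfold top_set. rewrite filter_In, in_seq0, Nat.ltb_lt. reflexivity. Qed.

Lemma sumR_top_ind m s h : sumR (seq 0 m) (top_ind m s h) = INR (length (top_set m s h)).
Proof. apply sumR_indicator. Qed.

Lemma top_ind_full m y h : (y < m)%nat -> top_ind m m h y = 1.
Proof.
  intros Hy. unfold top_ind. pose proof (n_above_lt_m m y h Hy).
  destruct (Nat.ltb_spec (n_above m y h) m); [reflexivity | lia].
Qed.

Lemma top_err_risk m s p h : sumR (seq 0 m) p = 1 ->
  sumR (seq 0 m) (fun y => p y * top_err m s y h) =
  1 - sumR (seq 0 m) (fun y => p y * top_ind m s h y).
Proof.
  intros Hp. rewrite <- Hp, <- sumR_minus. apply sumR_ext. intros y _.
  unfold top_err, top_ind.
  destruct (Nat.leb_spec s (n_above m y h)), (Nat.ltb_spec (n_above m y h) s); try lia; ring.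
Qed.

Lemma top_set_length_le m s h : (1 <= s)%nat -> (length (top_set m s h) <= s)%nat.
Proof.
  intros Hs.
  destruct (top_set m s h) as [|z Z] eqn:HZ; [simpl; lia|]. rewrite <- HZ.
  destruct (exists_argmin h (top_set m s h)) as (y0 & Hy0 & Hmin); [congruence|].
  apply In_top_set in Hy0 as [Hy0m Hy0s].
  assert (Hincl : incl (top_set m s h) (y0 :: above m h y0)).
  { intros x Hx. destruct (Nat.eq_dec x y0) as [-> | Hxy]; [left; reflexivity | right].
    apply In_above. pose proof (Hmin x Hx). apply In_top_set in Hx. tauto. }
  assert (HN : NoDup (top_set m s h)) by apply NoDup_filter, seq_NoDup.
  pose proof (NoDup_incl_length HN Hincl). rewrite n_above_length in Hy0s. simpl in *. lia.
Qed.

Lemma top_set_length_ge m s p : distinct_coords m p -> (s <= m)%nat ->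
  (s <= length (top_set m s p))%nat.
Proof.
  intros Hp Hs.
  set (W := filter (fun y => negb (n_above m y p <? s)%nat) (seq 0 m)).
  assert (HW : forall x, In x W <-> (x < m)%nat /\ (s <= n_above m x p)%nat).
  { intros x. unfold W. rewrite filter_In, in_seq0, Bool.negb_true_iff, Nat.ltb_ge. reflexivity. }
  assert (HN : NoDup (top_set m s p)) by apply NoDup_filter, seq_NoDup.
  destruct W as [|w W'] eqn:EW.
  - assert (Hincl : incl (seq 0 m) (top_set m s p)).
    { intros x Hx. apply in_seq0 in Hx. apply In_top_set. split; [exact Hx|].
      destruct (Nat.ltb_spec (n_above m x p) s) as [|Hge]; [assumption|].
      exfalso. apply (HW x). tauto. }
    pose proof (NoDup_incl_length (seq_NoDup m 0) Hincl). rewrite length_seq in *. lia.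
  - rewrite <- EW in HW.
    destruct (exists_argmin (fun y => - p y) W) as (x & HxW & Hmax); [rewrite EW; discriminate|].
    pose proof (proj1 (HW x) HxW) as [Hxm Hxs].
    assert (Hincl : incl (above m p x) (top_set m s p)).
    { intros j Hj. apply In_above in Hj as (Hjm & Hjx & Hpj). apply In_top_set.
      split; [exact Hjm|]. destruct (Nat.ltb_spec (n_above m j p) s) as [|Hge]; [assumption|].
      exfalso. specialize (Hmax j (proj2 (HW j) (conj Hjm Hge))). apply (Hp j x); auto. lra. }
    pose proof (NoDup_incl_length (NoDup_above m p x) Hincl). rewrite n_above_length in Hxs. lia.
Qed.

Lemma top_ind_optimal m s p h : (1 <= s <= m)%nat -> distinct_coords m p ->
  (forall y, (y < m)%nat -> 0 <= p y) ->
  sumR (seq 0 m) (fun y => p y * top_ind m s h y) <=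
  sumR (seq 0 m) (fun y => p y * top_ind m s p y).
Proof.
  intros Hs Hd Hp.
  pose proof (top_set_length_ge m s p Hd (proj2 Hs)) as Hge.
  pose proof (top_set_length_le m s h (proj1 Hs)) as Hle.
  destruct (exists_argmin p (top_set m s p)) as (y0 & Hy0 & Hmin).
  { intros HZ. rewrite HZ in Hge. simpl in Hge. lia. }
  pose proof Hy0 as [Hy0m Hy0s]%In_top_set.
  apply (sumR_threshold _ _ _ _ (p y0)).
  - apply Hp, Hy0m.
  - intros y _. unfold top_ind. destruct (n_above m y h <? s)%nat; lra.
  - intros y Hy. apply in_seq0 in Hy. unfold top_ind.
    destruct (Nat.ltb_spec (n_above m y p) s) as [Hys | Hys].
    + left. split; [reflexivity|]. apply Hmin, In_top_set. auto.
    + right. split; [reflexivity|]. apply Rnot_lt_le. intros Hlt.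
      pose proof (n_above_lt m p y y0 Hy Hlt). lia.
  - rewrite !sumR_top_ind. apply le_INR. lia.
Qed.

Theorem proposition9 (m k : nat) (J : nat -> (nat -> R) -> list nat) :
  (2 <= m)%nat -> (1 <= k <= m)%nat ->
  (forall y g, (y < m)%nat -> valid_trunc_set m k y g (J y g)) ->
  forall s : nat, (k <= s <= m)%nat ->
  top_s_calibrated m s (trunc_topk_loss J).
Proof.
  intros _ Hk HJ s Hs p [p_nonneg p_sum] p_distinct g g_min g'.
  unfold cond_risk. rewrite !top_err_risk by exact p_sum.
  enough (sumR (seq 0 m) (fun y => p y * top_ind m s g' y) <=
          sumR (seq 0 m) (fun y => p y * top_ind m s g y)) by lra.
  destruct (Nat.eq_dec s m) as [-> | Hsm].
  - right. apply sumR_ext. intros y Hy. apply in_seq0 in Hy.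
    rewrite !top_ind_full by exact Hy. reflexivity.
  - assert (Hkm : (k < m)%nat) by lia.
    rewrite (sumR_ext _ (fun y => p y * top_ind m s g y) (fun y => p y * top_ind m s p y)).
    + apply top_ind_optimal; auto; lia.
    + intros y Hy. apply in_seq0 in Hy. unfold top_ind.
      rewrite (n_above_order m p g y p_distinct); auto.
      exact (minimizer_order m k J HJ p g Hkm p_nonneg g_min).
Qed.
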